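(* Let $(c_k)_{k\ge0}$ be any non-decreasing positive sequence. Under the DecSPS-NS stepsize (defined in the context), for every $k\in\mathbb{N}$, $\frac{c_0\gamma_\ell}{c_k}\le\gamma_k\le\frac{c_0\gamma_b}{c_k}$, and $\gamma_k\le\gamma_{k-1}$.
   Context: For $\mathcal S\subseteq[n]$, $f_{\mathcal S}:=\frac1{|\mathcal S|}\sum_{i\in\mathcal S}f_i$ with each $f_i:\mathbb{R}^d\to\mathbb{R}$ convex and lower bounded, $f^*_{\mathcal S}:=\inf_xf_{\mathcal S}(x)$, $\ell^*_{\mathcal S}$ a given real number with $\ell^*_{\mathcal S}\le f^*_{\mathcal S}$, and $g_{\mathcal S}(x)$ a subgradient of $f_{\mathcal S}$ at $x$. For any sequence of minibatches $\mathcal S_k$ and points $x^k$ with $g_{\mathcal S_k}(x^k)\neq0$, the DecSPS-NS stepsize is $\gamma_k:=\frac1{c_k}\min\left\{\max\left\{c_0\gamma_\ell,\ \frac{f_{\mathcal S_k}(x^k)-\ell^*_{\mathcal S_k}}{\|g_{\mathcal S_k}(x^k)\|^2}\right\},\ c_{k-1}\gamma_{k-1}\right\}$ for $k\ge0$, with $c_{-1}=c_0$, $\gamma_{-1}=\gamma_b$, where $0<\gamma_\ell\le\gamma_b$ are fixed constants. *)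

From HB Require Import structures.
From mathcomp Require Import all_boot all_order all_algebra.
Set Implicit Arguments. Unset Strict Implicit. Unset Printing Implicit Defensive.
Import Order.TTheory GRing.Theory Num.Theory.
Local Open Scope ring_scope.

Section DecSPS.
Variables (R : realFieldType) (d : nat).

Definition dotp (u v : 'rV[R]_d) : R := \sum_(j < d) u ord0 j * v ord0 j.
Definition sqnorm (u : 'rV[R]_d) : R := dotp u u.

Definition convex_fun (h : 'rV[R]_d -> R) : Prop :=
  forall (x y : 'rV[R]_d) (t : R), 0 <= t -> t <= 1 ->
    h (t *: x + (1 - t) *: y) <= t * h x + (1 - t) * h y.

Definition lower_bounded (h : 'rV[R]_d -> R) : Prop :=
  exists m : R, forall x, m <= h x.

Definition is_subgrad (h : 'rV[R]_d -> R) (x v : 'rV[R]_d) : Prop :=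
  forall y, h x + dotp v (y - x) <= h y.

Definition fS (n : nat) (f : 'I_n -> 'rV[R]_d -> R) (S : {set 'I_n})
  (x : 'rV[R]_d) : R := (#|S|%:R)^-1 * \sum_(i in S) f i x.

(* DecSPS-NS stepsize.  [a k] is the ratio
   (f_{S_k}(x^k) - l*_{S_k}) / ||g_{S_k}(x^k)||^2; the convention
   c_{-1} = c_0, gamma_{-1} = gamma_b is built into the k = 0 case. *)
Fixpoint decsps (c a : nat -> R) (gl gb : R) (k : nat) : R :=
  (c k)^-1 * Num.min (Num.max (c 0%N * gl) (a k))
    (match k with
     | 0 => c 0%N * gb
     | k'.+1 => c k' * decsps c a gl gb k'
     end).

End DecSPS.

From HB Require Import structures.
From mathcomp Require Import all_boot all_order all_algebra.
Import Order.TTheory GRing.Theory Num.Theory.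
Local Open Scope ring_scope.

(* The scaled stepsize [c k * gamma k] is
   a min of a max with [c 0 * gl] and of the previous scaled stepsize (or of
   [c 0 * gb] at k = 0), so by induction it stays in [[c 0 * gl, c 0 * gb]]
   and is non-increasing.  Dividing by [c k] gives the bounds, and
   [gamma k.+1 <= (c k / c k.+1) * gamma k <= gamma k] since [c] is
   non-decreasing.  Nothing about the functions [f_i], the subgradients or the
   lower bounds is used: the claims hold for any ratio sequence [a]. *)

Section DecSPSBounds.
Variables (R : realFieldType) (c a : nat -> R) (gl gb : R).
Hypotheses (gl_gt0 : 0 < gl) (gl_le_gb : gl <= gb) (c_gt0 : forall k, 0 < c k).

Local Notation gamma := (decsps c a gl gb).

Lemma mul_decsps k :
  c k * gamma k = Num.min (Num.max (c 0%N * gl) (a k))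
    (match k with 0 => c 0%N * gb | k'.+1 => c k' * gamma k' end).
Proof. by case: k => [|k]; rewrite /= mulVKf ?lt0r_neq0. Qed.

Lemma mul_decsps0_le : c 0%N * gamma 0%N <= c 0%N * gb.
Proof. by rewrite mul_decsps ge_min lexx orbT. Qed.

Lemma mul_decspsS_le k : c k.+1 * gamma k.+1 <= c k * gamma k.
Proof. by rewrite mul_decsps ge_min lexx orbT. Qed.

Lemma mul_decsps_bounds k : c 0%N * gl <= c k * gamma k <= c 0%N * gb.
Proof.
elim: k => [|k /andP[lo hi]].
  by rewrite mul_decsps0_le andbT mul_decsps le_min le_max lexx ler_pM2l.
rewrite (le_trans (mul_decspsS_le k) hi) andbT.
by rewrite mul_decsps le_min le_max lexx.
Qed.

Lemma decsps_bounds k : c 0%N * gl / c k <= gamma k <= c 0%N * gb / c k.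
Proof.
have -> : gamma k = c k * gamma k / c k by rewrite mulrC mulKf ?lt0r_neq0.
by rewrite !ler_pM2r ?invr_gt0 // mul_decsps_bounds.
Qed.

Lemma decsps_ge0 k : 0 <= gamma k.
Proof.
case/andP: (decsps_bounds k) => + _; apply: le_trans.
by rewrite divr_ge0 ?mulr_ge0 ?ltW.
Qed.

Lemma decsps0_le : gamma 0%N <= gb.
Proof. by rewrite -(ler_pM2l (c_gt0 0%N)) mul_decsps0_le. Qed.

Lemma decspsS_le (c_nondecr : forall k, c k <= c k.+1) k :
  gamma k.+1 <= gamma k.
Proof.
rewrite -(ler_pM2l (c_gt0 k.+1)).
apply: le_trans (mul_decspsS_le k) _.
by rewrite ler_wpM2r ?decsps_ge0.
Qed.

End DecSPSBounds.

Theorem lemma6 (R : realFieldType) (d n : nat)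
  (f : 'I_n -> 'rV[R]_d -> R)
  (hconv : forall i, convex_fun (f i))
  (hlb : forall i, lower_bounded (f i))
  (lstar : {set 'I_n} -> R)
  (hlstar : forall S : {set 'I_n}, S != set0 -> forall x, lstar S <= fS f S x)
  (g : {set 'I_n} -> 'rV[R]_d -> 'rV[R]_d)
  (hg : forall (S : {set 'I_n}) x, S != set0 -> is_subgrad (fS f S) x (g S x))
  (Sk : nat -> {set 'I_n}) (hSk : forall k, Sk k != set0)
  (xk : nat -> 'rV[R]_d)
  (hgnz : forall k, g (Sk k) (xk k) != 0)
  (gl gb : R) (hgl : 0 < gl) (hglb : gl <= gb)
  (c : nat -> R) (hcpos : forall k, 0 < c k) (hcinc : forall k, c k <= c k.+1) :
  let a := fun k => (fS f (Sk k) (xk k) - lstar (Sk k)) / sqnorm (g (Sk k) (xk k)) in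
  let gamma := decsps c a gl gb in
  forall k : nat,
    c 0%N * gl / c k <= gamma k <= c 0%N * gb / c k /\
    gamma k <= (match k with 0 => gb | k'.+1 => gamma k' end).
Proof.
move=> a gamma k; split; first exact: decsps_bounds.
case: k => [|k]; first exact: decsps0_le.
exact: decspsS_le.
Qed.
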